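(* Let $C$ be a bialgebra over a commutative ring $\Bbbk$. The Lie algebra structure on $\mathrm{Cotor}^1_C(\Bbbk,\Bbbk)$ (the degree $1$ part of the Gerstenhaber algebra $\mathrm{Cotor}^*_C(\Bbbk,\Bbbk)$, with its degree $-1$ bracket) coincides with the Lie algebra $P(C)=\{x\in C:\Delta x=x\otimes 1+1\otimes x\}$ of primitive elements of $C$ with bracket $[x,y]=xy-yx$.
   Context: The Gerstenhaber structure on $\mathrm{Cotor}^*_C(\Bbbk,\Bbbk)$ is the one induced by the operad with multiplication $\mathcal{O}_C$: $\mathcal{O}_C(n)=C^{\otimes n}$, identity $1_C$, $(a_1\otimes\dots\otimes a_m)\circ_i(b_1\otimes\dots\otimes b_n)=a_1\otimes\dots\otimes a_{i-1}\otimes a_i^{(1)}b_1\otimes\dots\otimes a_i^{(n)}b_n\otimes a_{i+1}\otimes\dots\otimes a_m$ (with $\Delta^{n-1}(a_i)=a_i^{(1)}\otimes\dots\otimes a_i^{(n)}$), multiplication $1_C\otimes1_C$, $e=1\in\Bbbk$. For an operad with multiplication $(O,\mu,e)$ the cochain complex has $df=\mu\circ_2f+\sum_{i=1}^n(-1)^if\circ_i\mu+(-1)^{n+1}\mu\circ_1f$ on $O(n)$, and the bracket is $\{f,g\}=f\bar\circ g-(-1)^{(m-1)(n-1)}g\bar\circ f$, $f\bar\circ g=(-1)^{(m-1)(n-1)}\sum_{i=1}^m(-1)^{(n-1)(i-1)}f\circ_ig$ for $f\in O(m)$, $g\in O(n)$; it induces the bracket on cohomology. *)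

From HB Require Import structures.
From mathcomp Require Import all_boot all_algebra.
From mathcomp Require Import finmap monalg.

Set Implicit Arguments.
Unset Strict Implicit.
Unset Printing Implicit Defensive.

Import GRing.Theory.
Local Open Scope ring_scope.

(* A word [:: a1; ...; an] stands for a1 (x) ... (x) an in C^{(x)n};    *)
(* C^{(x)n} is the quotient of the length-n part of FT k C by the       *)
(* multilinearity relations (predicate [tnull] below).  Hence           *)
(* O_C(n) = C^{(x)n} is represented by elements of FT supported on      *)
(* words of length n ([homog n]) up to [teq].                           *)
Section Tensors.
Variables (k : comRingType) (C : algType k).

Definition FT := {malg k[seq C]}.

Definition tb (s : seq C) : FT := << s >>.

Definition lext (K : choiceType) (V : lmodType k) (g : K -> V)
  (f : {malg k[K]}) : V := \sum_(t <- msupp f) f@_t *: g t.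

Inductive tnull : FT -> Prop :=
| tnull_add (s1 s2 : seq C) (a b : C) :
    tnull (tb (s1 ++ (a + b) :: s2) - tb (s1 ++ a :: s2) - tb (s1 ++ b :: s2))
| tnull_scale (s1 s2 : seq C) (r : k) (a : C) :
    tnull (tb (s1 ++ (r *: a) :: s2) - r *: tb (s1 ++ a :: s2))
| tnull0 : tnull 0
| tnullD f g : tnull f -> tnull g -> tnull (f + g)
| tnullZ (r : k) f : tnull f -> tnull (r *: f).

Definition teq (f g : FT) : Prop := tnull (f - g).

Definition homog (n : nat) (f : FT) : Prop :=
  forall t, t \in msupp f -> size t = n.

(* elements of C (x) C are represented in the free module on pairs *)
Definition emb2 (g : {malg k[(C * C)%type]}) : FT :=
  lext (fun p : C * C => tb [:: p.1; p.2]) g.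

Record is_bialgebra (Delta : C -> {malg k[(C * C)%type]}) (eps : C -> k)
  : Prop := {
  eps_linear : forall (r : k) (a b : C), eps (r *: a + b) = r * eps a + eps b;
  eps_mul : forall a b : C, eps (a * b) = eps a * eps b;
  eps_one : eps 1 = 1;
  Delta_linear : forall (r : k) (a b : C),
    teq (emb2 (Delta (r *: a + b))) (r *: emb2 (Delta a) + emb2 (Delta b));
  Delta_coassoc : forall a : C,
    teq (lext (fun p : C * C =>
               lext (fun q : C * C => tb [:: q.1; q.2; p.2]) (Delta p.1))
              (Delta a))
        (lext (fun p : C * C =>
               lext (fun q : C * C => tb [:: p.1; q.1; q.2]) (Delta p.2))
              (Delta a));
  Delta_counitl : forall a : C,
    lext (fun p : C * C => eps p.1 *: p.2) (Delta a) = a;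
  Delta_counitr : forall a : C,
    lext (fun p : C * C => eps p.2 *: p.1) (Delta a) = a;
  Delta_mul : forall a b : C,
    teq (emb2 (Delta (a * b)))
        (lext (fun p : C * C =>
               lext (fun q : C * C => tb [:: p.1 * q.1; p.2 * q.2]) (Delta b))
              (Delta a));
  Delta_one : teq (emb2 (Delta 1)) (tb [:: 1; 1])
}.

Definition primitive (Delta : C -> {malg k[(C * C)%type]}) (x : C) : Prop :=
  teq (emb2 (Delta x)) (tb [:: x; 1] + tb [:: 1; x]).

Section Operad.
Variables (Delta : C -> {malg k[(C * C)%type]}) (eps : C -> k).

(* iterated coproduct Delta^{n-1} : C -> C^{(x)n}, with Delta^{-1} = eps,
   Delta^0 = id, Delta^{n+1} = (Delta (x) id^{(x)n}) o Delta^n *)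
Fixpoint iterD (n : nat) (a : C) : FT :=
  match n with
  | 0 => eps a *: tb [::]
  | 1 => tb [:: a]
  | m.+1 => lext (fun t : seq C =>
              lext (fun p : C * C => tb (p.1 :: p.2 :: behead t))
                   (Delta (head 0 t)))
            (iterD m a)
  end.

(* (a_1 .. a_m) o_i (b_1 .. b_n), i is 1-based as in the paper *)
Definition ocomp_basis (i : nat) (t s : seq C) : FT :=
  lext (fun u : seq C =>
          tb (take i.-1 t ++ [seq x.1 * x.2 | x <- zip u s] ++ drop i t))
       (iterD (size s) (nth 0 t i.-1)).

Definition ocomp (i : nat) (f g : FT) : FT :=
  lext (fun t : seq C => lext (fun s : seq C => ocomp_basis i t s) g) f.

Definition omu : FT := tb [:: 1; 1].

Definition odiff (n : nat) (f : FT) : FT :=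
  ocomp 2 omu f
  + \sum_(1 <= i < n.+1) (-1) ^+ i *: ocomp i f omu
  + (-1) ^+ n.+1 *: ocomp 1 omu f.

Definition ocircbar (m n : nat) (f g : FT) : FT :=
  (-1) ^+ ((m.-1) * (n.-1)) *:
    \sum_(1 <= i < m.+1) (-1) ^+ ((n.-1) * (i.-1)) *: ocomp i f g.

Definition obracket (m n : nat) (f g : FT) : FT :=
  ocircbar m n f g - (-1) ^+ ((m.-1) * (n.-1)) *: ocircbar n m g f.

Definition cocycle (n : nat) (f : FT) : Prop :=
  homog n f /\ teq (odiff n f) 0.

Definition cohomologous (n : nat) (f g : FT) : Prop :=
  exists h : FT, homog n.-1 h /\ teq (f - g) (odiff n.-1 h).

End Operad.
End Tensors.

(* O_C(0) = k, and on it the coboundary vanishes because mu o_2 c = mu o_1 c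
   for a scalar c; hence B^1 = 0 and Cotor^1 is the space of 1-cocycles.  On
   O_C(1) = C the coboundary is d x = 1 (x) x - Delta x + x (x) 1, so the
   1-cocycles are exactly the primitive elements, and the bracket of two
   elements of O_C(1) is x o_1 y - y o_1 x = xy - yx.  What is left is
   bookkeeping with the presentation of the tensor powers: a homogeneous
   element of degree one is equivalent to the single letter obtained by
   collecting its coefficients, and the multilinearity relations never
   identify two distinct one-letter words. *)
From HB Require Import structures.
From mathcomp Require Import all_boot all_algebra.
From mathcomp Require Import finmap monalg.

Set Implicit Arguments.
Unset Strict Implicit.
Unset Printing Implicit Defensive.

Import GRing.Theory.
Local Open Scope ring_scope.

Section LinearExtension.
Variables (k : comNzRingType) (K : choiceType) (V : lmodType k).
Implicit Types (g : K -> V) (f : {malg k[K]}).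

Lemma lextE_fsubset g f (d : {fset K}) : (msupp f `<=` d)%fset ->
  lext g f = \sum_(t <- d) f@_t *: g t.
Proof.
move=> le; rewrite /lext [LHS](big_fset_incl _ le) => //= x xd /mcoeff_outdom ->.
by rewrite scale0r.
Qed.

Lemma lext0 g : lext g 0 = 0.
Proof. by rewrite /lext msupp0 big_seq_fset0. Qed.

Lemma lextD g f1 f2 : lext g (f1 + f2) = lext g f1 + lext g f2.
Proof.
rewrite !(@lextE_fsubset _ _ (msupp f1 `|` msupp f2)%fset)
  ?fsubsetUl ?fsubsetUr ?msuppD_le //.
by rewrite -big_split; apply: eq_bigr => t _; rewrite mcoeffD scalerDl.
Qed.

Lemma lextZ g (r : k) f : lext g (r *: f) = r *: lext g f.
Proof.
rewrite (@lextE_fsubset _ _ (msupp f)) ?msuppZ_le // /lext scaler_sumr.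
by apply: eq_bigr => t _; rewrite mcoeffZ scalerA.
Qed.

Lemma lextB g f1 f2 : lext g (f1 - f2) = lext g f1 - lext g f2.
Proof. by rewrite lextD -[- f2]scaleN1r lextZ scaleN1r. Qed.

Lemma lext_sum g (I : Type) (r : seq I) (F : I -> {malg k[K]}) :
  lext g (\sum_(i <- r) F i) = \sum_(i <- r) lext g (F i).
Proof.
elim: r => [|i r IH]; first by rewrite !big_nil lext0.
by rewrite !big_cons lextD IH.
Qed.

Lemma lextU g t : lext g << t >> = g t.
Proof. by rewrite (lextE_fsubset _ msuppU_le) big_seq_fset1 mcoeffUU scale1r. Qed.

Lemma eq_lext_in g1 g2 f : {in msupp f, g1 =1 g2} -> lext g1 f = lext g2 f.
Proof. by move=> eq_g; apply: eq_big_seq => t /eq_g ->. Qed.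

Lemma eq_lext g1 g2 f : g1 =1 g2 -> lext g1 f = lext g2 f.
Proof. by move=> eq_g; apply: eq_lext_in => t _; apply: eq_g. Qed.

Lemma lext0fun f : lext (fun _ => 0 : V) f = 0.
Proof. by rewrite /lext big1 // => t _; rewrite scaler0. Qed.

Lemma lextDfun g1 g2 f : lext (fun t => g1 t + g2 t) f = lext g1 f + lext g2 f.
Proof. by rewrite /lext -big_split; apply: eq_bigr => t _; rewrite scalerDr. Qed.

Lemma lextZfun (c : k) g f : lext (fun t => c *: g t) f = c *: lext g f.
Proof.
by rewrite /lext scaler_sumr; apply: eq_bigr => t _; rewrite !scalerA mulrC.
Qed.

Lemma lext_sumfun (I : Type) (r : seq I) (G : I -> K -> V) f :
  lext (fun t => \sum_(i <- r) G i t) f = \sum_(i <- r) lext (G i) f.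
Proof.
elim: r => [|i r IH]; first by rewrite big_nil -[RHS](lext0fun f); apply: eq_lext => t; rewrite big_nil.
by rewrite big_cons -IH -lextDfun; apply: eq_lext => t; rewrite big_cons.
Qed.

Lemma lext_id f : lext (fun t => << t >>) f = f.
Proof.
rewrite [RHS]monalgE; apply: eq_bigr => t _; apply/malgP => s.
by rewrite mcoeffZ !mcoeffU; case: (t == s); rewrite ?mulr1 ?mulr0.
Qed.

End LinearExtension.

Lemma lext_lext (k : comNzRingType) (K K' : choiceType) (V : lmodType k)
  (G : K' -> V) (g : K -> {malg k[K']}) (f : {malg k[K]}) :
  lext G (lext g f) = lext (fun t => lext G (g t)) f.
Proof. by rewrite [lext g f]/lext lext_sum; apply: eq_bigr => t _; rewrite lextZ. Qed.

Lemma lext_swap (k : comNzRingType) (K K' : choiceType) (V : lmodType k)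
  (F : K -> K' -> V) (f : {malg k[K]}) (g : {malg k[K']}) :
  lext (fun t => lext (F t) g) f = lext (fun s => lext (F^~ s) f) g.
Proof.
rewrite /lext; under eq_bigr do rewrite scaler_sumr.
rewrite exchange_big /=; apply: eq_bigr => s _; rewrite scaler_sumr.
by apply: eq_bigr => t _; rewrite !scalerA mulrC.
Qed.

Section TensorEquality.
Variables (k : comNzRingType) (C : algType k).
Implicit Types (f g h : FT C).

Lemma tnullN f : tnull f -> tnull (- f).
Proof. by move=> f0; rewrite -scaleN1r; apply: tnullZ. Qed.

Lemma teq_refl f : teq f f.
Proof. by rewrite /teq subrr; apply: tnull0. Qed.

Lemma teq_sym f g : teq f g -> teq g f.
Proof. by rewrite /teq => /tnullN; rewrite opprB. Qed.

Lemma teq_trans f g h : teq f g -> teq g h -> teq f h.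
Proof. by rewrite /teq => fg gh; have := tnullD fg gh; rewrite addrA subrK. Qed.

Lemma teqD f1 f2 g1 g2 : teq f1 g1 -> teq f2 g2 -> teq (f1 + f2) (g1 + g2).
Proof.
by rewrite /teq => fg1 fg2; have := tnullD fg1 fg2; rewrite opprD addrACA.
Qed.

Lemma teqZ (r : k) f g : teq f g -> teq (r *: f) (r *: g).
Proof. by rewrite /teq -scalerBr; apply: tnullZ. Qed.

Lemma teqN f g : teq f g -> teq (- f) (- g).
Proof. by rewrite -!scaleN1r; apply: teqZ. Qed.

Definition teq_linear (F : C -> FT C) :=
  forall (r : k) (a b : C), teq (F (r *: a + b)) (r *: F a + F b).

Lemma teq_linear0 F : teq_linear F -> teq (F 0) 0.
Proof.
move=> linF; have := linF 1 0 0; rewrite !scale1r addr0 /teq.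
by rewrite opprD addrA subrr sub0r subr0 => /tnullN; rewrite opprK.
Qed.

Lemma teq_linear_sum F (I : Type) (r : seq I) (c : I -> k) (a : I -> C) :
  teq_linear F ->
  teq (F (\sum_(i <- r) c i *: a i)) (\sum_(i <- r) c i *: F (a i)).
Proof.
move=> linF; elim: r => [|i r IH]; first by rewrite !big_nil; apply: teq_linear0.
rewrite !big_cons; apply: teq_trans (linF _ _ _) _.
by apply: teqD => //; apply: teq_refl.
Qed.

Lemma teq_linear_tb (s1 s2 : seq C) : teq_linear (fun a => tb (s1 ++ a :: s2)).
Proof.
move=> r a b; apply: (@teq_trans _ (tb (s1 ++ r *: a :: s2) + tb (s1 ++ b :: s2))).
  by rewrite /teq opprD addrA; apply: tnull_add.
by apply: teqD; [apply: tnull_scale | apply: teq_refl].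
Qed.

Lemma teq_linearD F G :
  teq_linear F -> teq_linear G -> teq_linear (fun a => F a + G a).
Proof.
move=> linF linG r a b; apply: teq_trans (teqD (linF r a b) (linG r a b)) _.
by rewrite scalerDr addrACA; apply: teq_refl.
Qed.

Lemma teq_linearN F : teq_linear F -> teq_linear (fun a => - F a).
Proof.
move=> linF r a b; apply: teq_trans (teqN (linF r a b)) _.
by rewrite opprD scalerN; apply: teq_refl.
Qed.

Lemma teq_linearB F G :
  teq_linear F -> teq_linear G -> teq_linear (fun a => F a - G a).
Proof. by move=> linF linG; apply: teq_linearD => //; apply: teq_linearN. Qed.

Definition one_letter (t : seq C) : C := if size t == 1%N then head 0 t else 0.

Lemma one_letter_cat (s1 s2 : seq C) (a : C) :
  one_letter (s1 ++ a :: s2) = if (s1 == [::]) && (s2 == [::]) then a else 0.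
Proof.
case: s1 => [|c s1]; first by case: s2.
by rewrite /one_letter /= size_cat addnS.
Qed.

(* The multilinearity relations only relate words of equal length, and
   within length one they are the linear relations of C itself. *)
Lemma tnull_one_letter f : tnull f -> lext one_letter f = 0.
Proof.
elim=> [s1 s2 a b|s1 s2 r a|||].
- rewrite !lextB !lextU !one_letter_cat.
  by case: ifP => _; rewrite ?subrr // [a + b]addrC addrK subrr.
- rewrite lextB lextZ !lextU !one_letter_cat.
  by case: ifP => _; rewrite ?scaler0 subrr.
- exact: lext0.
- by move=> f1 f2 _ f1_0 _ f2_0; rewrite lextD f1_0 f2_0 addr0.
- by move=> r f1 _ f1_0; rewrite lextZ f1_0 scaler0.
Qed.

Lemma teq_tb1_inj (x y : C) : teq (tb [:: x]) (tb [:: y]) -> x = y.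
Proof.
move/tnull_one_letter; rewrite lextB !lextU /one_letter /=.
by move/eqP; rewrite subr_eq0 => /eqP.
Qed.

Lemma homog0 n : homog n (0 : FT C).
Proof. by move=> t; rewrite msupp0 inE. Qed.

Lemma homog_tb1 (x : C) : homog 1 (tb [:: x]).
Proof. by move=> t /(fsubsetP msuppU_le); rewrite inE => /eqP ->. Qed.

Lemma homog1_lext (V : lmodType k) (G : seq C -> V) f : homog 1 f ->
  lext G f = lext (fun t => G [:: head 0 t]) f.
Proof. by move=> f1; apply: eq_lext_in => t /f1; case: t => [|a []]. Qed.

Lemma homog1_teq_tb f : homog 1 f -> teq f (tb [:: lext (head 0) f]).
Proof.
move=> f1; rewrite -[X in teq X _]lext_id (homog1_lext _ f1).
by apply: teq_sym; apply: (teq_linear_sum _ _ _ (teq_linear_tb [::] [::])).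
Qed.

End TensorEquality.

Section Coboundary.
Variables (k : comNzRingType) (C : algType k).
Variables (Delta : C -> {malg k[(C * C)%type]}) (eps : C -> k).
Implicit Types (f g h : FT C).

Local Notation ocomp := (ocomp Delta eps).
Local Notation odiff := (odiff Delta eps).
Local Notation omu := (@omu k C).

Lemma ocomp_tb i t s : ocomp i (tb t) (tb s) = ocomp_basis Delta eps i t s.
Proof. by rewrite /ocomp !lextU. Qed.

Lemma ocomp_lext_l i f g : ocomp i f g = lext (fun t => ocomp i (tb t) g) f.
Proof. by apply: eq_lext => t; rewrite /ocomp lextU. Qed.

Lemma ocomp_lext_r i f g : ocomp i f g = lext (fun s => ocomp i f (tb s)) g.
Proof.
rewrite {1}/ocomp lext_swap; apply: eq_lext => s.
by apply: eq_lext => t; rewrite lextU.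
Qed.

Lemma odiff_lext n f : odiff n f = lext (fun t => odiff n (tb t)) f.
Proof.
rewrite {1}/odiff (ocomp_lext_r 2 omu f) (ocomp_lext_r 1 omu f).
under eq_bigr do rewrite (ocomp_lext_l _ f) -lextZfun.
by rewrite -lext_sumfun -lextZfun -!lextDfun.
Qed.

Lemma ocomp_tb1 (x y : C) : ocomp 1 (tb [:: x]) (tb [:: y]) = tb [:: x * y].
Proof. by rewrite ocomp_tb /ocomp_basis /= lextU. Qed.

Lemma ocomp_tb1_mu (x : C) : ocomp 1 (tb [:: x]) omu = emb2 (Delta x).
Proof.
rewrite ocomp_tb /ocomp_basis /= lextU lext_lext; apply: eq_lext => p.
by rewrite lextU /= !mulr1.
Qed.

Lemma ocomp2_mu_tb1 (y : C) : ocomp 2 omu (tb [:: y]) = tb [:: 1; y].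
Proof. by rewrite ocomp_tb /ocomp_basis /= lextU /= mul1r. Qed.

Lemma ocomp1_mu_tb1 (y : C) : ocomp 1 omu (tb [:: y]) = tb [:: y; 1].
Proof. by rewrite ocomp_tb /ocomp_basis /= lextU /= mul1r. Qed.

Lemma odiff0_tb_nil : odiff 0 (tb [::]) = 0.
Proof.
rewrite /odiff big_geq // addr0 expr1 scaleN1r !ocomp_tb.
by apply/eqP; rewrite subr_eq0; apply/eqP; apply: eq_lext => -[].
Qed.

Lemma odiff0_homog h : homog 0 h -> odiff 0 h = 0.
Proof.
move=> h0; rewrite odiff_lext -(lext0fun _ h).
by apply: eq_lext_in => t /h0; case: t => // _; apply: odiff0_tb_nil.
Qed.

Lemma cohomologous1P f g : cohomologous Delta eps 1 f g <-> teq f g.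
Proof.
rewrite /cohomologous /teq; split.
  by case=> h [/odiff0_homog ->]; rewrite subr0.
move=> fg; exists 0; split; first exact: homog0.
by rewrite odiff0_homog ?subr0 //; apply: homog0.
Qed.

Lemma odiff1_tb (y : C) :
  odiff 1 (tb [:: y]) = tb [:: 1; y] - emb2 (Delta y) + tb [:: y; 1].
Proof.
rewrite /odiff big_nat1 expr1 scaleN1r -signr_odd /= expr0 scale1r.
by rewrite ocomp2_mu_tb1 ocomp_tb1_mu ocomp1_mu_tb1.
Qed.

Lemma cocycle1_tbP (x : C) :
  cocycle Delta eps 1 (tb [:: x]) <-> primitive Delta x.
Proof.
rewrite /cocycle odiff1_tb /primitive /teq.
have -> : tb [:: 1; x] - emb2 (Delta x) + tb [:: x; 1] - 0 =
          tb [:: x; 1] + tb [:: 1; x] - emb2 (Delta x).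
  by rewrite subr0 addrC addrA.
split=> [[_ /teq_sym //]|prim]; split; first exact: homog_tb1.
exact: teq_sym.
Qed.

Lemma ocircbar11 f g : ocircbar Delta eps 1 1 f g = ocomp 1 f g.
Proof.
have sign1 : (-1 : k) ^+ (1.-1 * 1.-1) = 1 := expr0 _.
by rewrite /ocircbar big_nat1 sign1 !scale1r.
Qed.

Lemma obracket11 f g :
  obracket Delta eps 1 1 f g = ocomp 1 f g - ocomp 1 g f.
Proof.
have sign1 : (-1 : k) ^+ (1.-1 * 1.-1) = 1 := expr0 _.
by rewrite /obracket !ocircbar11 sign1 scale1r.
Qed.

Lemma obracket11_tb (x y : C) :
  obracket Delta eps 1 1 (tb [:: x]) (tb [:: y]) = tb [:: x * y] - tb [:: y * x].
Proof. by rewrite obracket11 !ocomp_tb1. Qed.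

Hypothesis bialgebra_C : is_bialgebra Delta eps.

Lemma odiff1_tb_linear : teq_linear (fun a => odiff 1 (tb [:: a])).
Proof.
have lin_Delta : teq_linear (fun a => emb2 (Delta a)) := Delta_linear bialgebra_C.
have lin_d1 := teq_linearD (teq_linearB (teq_linear_tb [:: 1] [::]) lin_Delta)
                           (teq_linear_tb [::] [:: 1]).
by move=> r a b; rewrite !odiff1_tb; apply: lin_d1.
Qed.

Lemma homog1_odiff1 f : homog 1 f ->
  teq (odiff 1 f) (odiff 1 (tb [:: lext (head 0) f])).
Proof.
move=> f1; rewrite odiff_lext (homog1_lext _ f1).
by apply: teq_sym; apply: (teq_linear_sum _ _ _ odiff1_tb_linear).
Qed.

End Coboundary.

Theorem mainTheorem3 (k : comRingType) (C : algType k)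
  (Delta : C -> {malg k[(C * C)%type]}) (eps : C -> k) :
  is_bialgebra Delta eps ->
  (forall (r : k) (x y : C),
      teq (tb [:: r *: x + y]) (r *: tb [:: x] + tb [:: y])) /\
  (forall x : C, cocycle Delta eps 1 (tb [:: x]) <-> primitive Delta x) /\
  (forall f : FT C, cocycle Delta eps 1 f ->
      exists x : C, primitive Delta x /\
                    cohomologous Delta eps 1 f (tb [:: x])) /\
  (forall x y : C, primitive Delta x -> primitive Delta y ->
      cohomologous Delta eps 1 (tb [:: x]) (tb [:: y]) -> x = y) /\
  (forall x y : C, primitive Delta x -> primitive Delta y ->
      cohomologous Delta eps 1
        (obracket Delta eps 1 1 (tb [:: x]) (tb [:: y]))
        (tb [:: x * y - y * x])).
Proof.
move=> bialgebra_C; have lin_tb1 := teq_linear_tb (C := C) [::] [::].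
split; first exact: lin_tb1.
split; first exact: cocycle1_tbP.
split.
  move=> f [f1 df0]; exists (lext (head 0) f); split.
    apply/cocycle1_tbP; split; first exact: homog_tb1.
    exact: teq_trans (teq_sym (homog1_odiff1 bialgebra_C f1)) df0.
  by apply/cohomologous1P; apply: homog1_teq_tb.
split; first by move=> x y _ _ /cohomologous1P /teq_tb1_inj.
move=> x y _ _; apply/cohomologous1P; rewrite obracket11_tb.
have := lin_tb1 (-1) (y * x) (x * y).
by rewrite !scaleN1r [- (y * x) + _]addrC [- tb _ + _]addrC => /teq_sym.
Qed.
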